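(* Let $n\ge 3$ and let $K$ be a proper $4$-coloring of $H_2(n,n-1)$. Then $|T_x(K)|\le 2$ for all $x\in\mathbb{Z}_2^n$. Consequently $\mathrm{rb}(K)\le \frac{2}{n+1}$, with equality if and only if $|T_x(K)|=2$ for all $x\in\mathbb{Z}_2^n$.
   Context: $H_2(n,n-1)$ is the simple undirected graph with vertex set $\mathbb{Z}_2^n$ in which $x,y$ are adjacent iff their Hamming distance $|\{i:x_i\ne y_i\}|$ is at least $n-1$. For a simple graph $G=(V,E)$ and a proper $k$-coloring $K:V\to[k]$ (adjacent vertices receive different colors), an edge $(x,y)\in E$ is a transition edge for $K$ if the map obtained from $K$ by swapping the colors of $x$ and $y$ (i.e. assigning $K(y)$ to $x$, $K(x)$ to $y$, and keeping all other colors) is again a proper $k$-coloring. $T(K)$ is the set of transition edges, $T_x(K)=\{y: (x,y)\in T(K)\}$, and the robustness of $K$ is $\mathrm{rb}(K)=|T(K)|/|E|$ (edges counted as unordered pairs). *)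

From mathcomp Require Import all_boot all_order all_algebra.
Set Implicit Arguments. Unset Strict Implicit. Unset Printing Implicit Defensive.
Import Order.TTheory GRing.Theory Num.Theory.

(* Vertices of H_2(n,n-1): Z_2^n represented as functions 'I_n -> bool. *)
Definition vert (n : nat) := {ffun 'I_n -> bool}.

Definition hamming (n : nat) (x y : vert n) : nat := #|[set i | x i != y i]|.

Definition hadj (n : nat) (x y : vert n) : bool :=
  (x != y) && (n.-1 <= hamming x y).

Definition proper_col (T : finType) (adj : rel T) (k : nat) (K : T -> 'I_k) : Prop :=
  forall x y, adj x y -> K x != K y.

Definition swap_col (T : finType) (k : nat) (K : T -> 'I_k) (x y : T) : T -> 'I_k :=
  fun z => if z == x then K y else if z == y then K x else K z.

Definition is_transition (T : finType) (adj : rel T) (k : nat) (K : T -> 'I_k)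
  (x y : T) : bool :=
  adj x y && [forall u, forall v, adj u v ==> (swap_col K x y u != swap_col K x y v)].

Definition Tx (T : finType) (adj : rel T) (k : nat) (K : T -> 'I_k) (x : T) : {set T} :=
  [set y | is_transition adj K x y].

Definition edges (T : finType) (adj : rel T) : {set {set T}} :=
  [set e : {set T} | [exists x, exists y, adj x y && (e == [set x; y])]].

Definition trans_edges (T : finType) (adj : rel T) (k : nat) (K : T -> 'I_k)
  : {set {set T}} :=
  [set e : {set T} | [exists x, exists y, is_transition adj K x y && (e == [set x; y])]].

Definition rb (T : finType) (adj : rel T) (k : nat) (K : T -> 'I_k) : rat :=
  (#|trans_edges adj K|%:R / #|edges adj|%:R)%R.

From mathcomp Require Import all_boot all_order all_algebra zify.
Import Order.TTheory GRing.Theory Num.Theory.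
Set Implicit Arguments. Unset Strict Implicit. Unset Printing Implicit Defensive.

(* If y is in T_x, then after the swap y carries the colour of x while x
   carries the old colour of y next to all its other neighbours; hence the
   colour of y differs from the colours of x and of every other neighbour of x.
   So x, T_x and any neighbour of x outside T_x receive pairwise distinct
   colours, and as x has n + 1 >= 4 neighbours, 4 colours leave room for at
   most 2 transition neighbours. The robustness bound then follows by double
   counting in the (n + 1)-regular graph H_2(n,n-1). *)

Definition nbhd (T : finType) (adj : rel T) (x : T) : {set T} := [set y | adj x y].

Section Transitions.

Variables (T : finType) (adj : rel T) (k : nat) (K : T -> 'I_k).
Hypothesis adj_irr : irreflexive adj.

Lemma swap_colC x y : x != y -> swap_col K x y =1 swap_col K y x.
Proof. by move=> neq_xy z; rewrite /swap_col; case: eqVneq => // ->; rewrite (negPf neq_xy). Qed.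

Lemma is_transition_sym : symmetric adj -> symmetric (is_transition adj K).
Proof.
move=> adj_sym x y; rewrite /is_transition adj_sym.
case adj_yx: (adj y x) => //=.
have neq_xy : x != y by apply: contraTneq adj_yx => ->; rewrite adj_irr.
by apply: eq_forallb => u; apply: eq_forallb => v; rewrite !(swap_colC neq_xy).
Qed.

Lemma is_transition_irr : irreflexive (is_transition adj K).
Proof. by move=> x; rewrite /is_transition adj_irr. Qed.

Lemma Tx_sub_nbhd x : Tx adj K x \subset nbhd adj x.
Proof. by apply/subsetP => y; rewrite !inE => /andP[]. Qed.

(* The swapped colouring must separate x, now coloured K y, from w. *)
Lemma transition_color_neq x y w :
  is_transition adj K x y -> adj x w -> w != y -> K w != K y.
Proof.
case/andP=> _ /forallP/(_ x)/forallP/(_ w)/implyP swap_proper adj_xw neq_wy.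
have neq_wx : w != x by apply: contraTneq adj_xw => ->; rewrite adj_irr.
by move: (swap_proper adj_xw); rewrite /swap_col eqxx (negPf neq_wx) (negPf neq_wy) eq_sym.
Qed.

Lemma color_inj_setU1_Tx x z :
  adj x z -> {in z |: Tx adj K x &, injective K}.
Proof.
move=> adj_xz.
have color_neq u v : u \in Tx adj K x -> v \in z |: Tx adj K x -> u != v -> K v != K u.
  rewrite !inE => tr_xu v_in neq_uv; apply: (transition_color_neq tr_xu); last by rewrite eq_sym.
  by case/predU1P: v_in => [-> // | /andP[]].
move=> u v u_in v_in /eqP; apply: contraTeq => neq_uv.
case/setU1P: u_in => [eq_uz | tr_xu]; last by rewrite eq_sym color_neq.
case/setU1P: v_in => [eq_vz | tr_xv]; first by rewrite eq_uz eq_vz eqxx in neq_uv.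
by rewrite color_neq ?eq_uz ?setU11 // eq_sym -eq_uz.
Qed.

Lemma card_setU1_Tx_le x z :
  proper_col adj K -> adj x z -> #|z |: Tx adj K x| <= k.-1.
Proof.
move=> K_proper adj_xz.
rewrite -(card_in_imset (color_inj_setU1_Tx adj_xz)) -[k in k.-1]card_ord -(cardsC1 (K x)).
apply/subset_leq_card/subsetP => _ /imsetP[y y_in ->].
rewrite !inE eq_sym; apply: K_proper.
by case/setU1P: y_in => [-> // | /(subsetP (Tx_sub_nbhd x))]; rewrite inE.
Qed.

Lemma card_Tx_le x :
  proper_col adj K -> k <= #|nbhd adj x| -> #|Tx adj K x| <= k - 2.
Proof.
move=> K_proper deg_x.
have sub_Tx := Tx_sub_nbhd x.
have [out_empty | [z]] := set_0Vmem (nbhd adj x :\: Tx adj K x); last first.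
  rewrite !inE => /andP[z_notin adj_xz].
  by have := card_setU1_Tx_le K_proper adj_xz; rewrite cardsU1 inE (negPf z_notin); lia.
have eq_Tx : Tx adj K x = nbhd adj x.
  by apply/eqP; rewrite eqEsubset sub_Tx -setD_eq0 out_empty eqxx.
have [-> | [z z_in]] := set_0Vmem (Tx adj K x); first by rewrite cards0.
have adj_xz : adj x z by move: z_in; rewrite eq_Tx inE.
by have := card_setU1_Tx_le K_proper adj_xz; rewrite cardsU1 z_in -eq_Tx in deg_x *; lia.
Qed.

End Transitions.

Section Handshake.

Variables (T : finType) (r : rel T).
Hypotheses (r_sym : symmetric r) (r_irr : irreflexive r).

Lemma orientations_of_edge x y : r x y ->
  [set p : T * T | r p.1 p.2 && ([set p.1; p.2] == [set x; y])] = [set (x, y); (y, x)].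
Proof.
move=> r_xy; apply/setP => -[a b]; rewrite !inE /= !xpair_eqE.
apply/andP/idP => [[r_ab /eqP eq_ab] | /orP[] /andP[/eqP-> /eqP->]].
- have : a \in [set x; y] by rewrite -eq_ab set21.
  have : b \in [set x; y] by rewrite -eq_ab set22.
  rewrite !inE => /orP[]/eqP eq_b /orP[]/eqP eq_a; subst a b;
    by [rewrite !eqxx /= ?orbT | rewrite r_irr in r_ab].
- by rewrite r_xy.
- by rewrite r_sym r_xy setUC.
Qed.

Lemma handshake : 2 * #|edges r| = \sum_x #|nbhd r x|.
Proof.
have -> : \sum_x #|nbhd r x| = \sum_(p : T * T | r p.1 p.2) 1.
  under eq_bigr => x _ do rewrite -sum1_card.
  under eq_bigr => x _ do under eq_bigl => y do rewrite inE.
  by rewrite (pair_big_dep xpredT r).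
rewrite (partition_big (fun p => [set p.1; p.2]) (mem (edges r))); last first.
  move=> p r_p; rewrite /edges !inE.
  by apply/existsP; exists p.1; apply/existsP; exists p.2; rewrite r_p /=.
rewrite mulnC -sum_nat_const; apply: eq_bigr => e.
rewrite /edges inE => /existsP[x /existsP[y /andP[r_xy /eqP->]]].
have neq_xy : x != y by apply: contraTneq r_xy => ->; rewrite r_irr.
by rewrite sum1dep_card orientations_of_edge // cards2 xpair_eqE (negPf neq_xy).
Qed.

End Handshake.

Lemma divr_nat_mul2l (m c d : nat) :
  (0 < m)%N -> (c%:R / d%:R = (m * c)%:R / (m * d)%:R :> rat)%R.
Proof. by move=> m_gt0; rewrite !natrM invfM mulrACA divff ?mul1r // pnatr_eq0 -lt0n. Qed.

Section RegularRobustness.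

Variables (T : finType) (adj : rel T) (d : nat).
Hypotheses (adj_sym : symmetric adj) (adj_irr : irreflexive adj).
Hypothesis adj_regular : forall x, #|nbhd adj x| = d.
Variables (k : nat) (K : T -> 'I_k).

Local Open Scope ring_scope.

Lemma rb_regular :
  rb adj K = (\sum_x #|Tx adj K x|)%:R / (#|T| * d)%:R.
Proof.
have card_E : (2 * #|edges adj| = #|T| * d)%N.
  by rewrite handshake // (eq_bigr _ (fun x _ => adj_regular x)) sum_nat_const.
have card_TE : (2 * #|trans_edges adj K| = \sum_x #|Tx adj K x|)%N.
  exact: handshake (is_transition_sym K adj_irr adj_sym) (is_transition_irr K adj_irr).
by rewrite /rb (@divr_nat_mul2l 2) // card_E card_TE.
Qed.

Variable c : nat.
Hypotheses (d_gt0 : (0 < d)%N) (T_gt0 : (0 < #|T|)%N).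
Hypothesis card_Tx_le_c : forall x, (#|Tx adj K x| <= c)%N.

Lemma sum_card_Tx_leqif :
  (\sum_x #|Tx adj K x| <= #|T| * c ?= iff [forall x, #|Tx adj K x| == c])%N.
Proof. by rewrite -sum_nat_const; apply: leqif_sum => x _; apply: leqif_eq. Qed.

Lemma rb_regular_le : rb adj K <= c%:R / d%:R.
Proof.
rewrite rb_regular (divr_nat_mul2l c d T_gt0) ler_pM2r ?invr_gt0 ?ltr0n ?muln_gt0 ?T_gt0 //.
by rewrite ler_nat sum_card_Tx_leqif.
Qed.

Lemma rb_regular_eq : rb adj K = c%:R / d%:R <-> forall x, #|Tx adj K x| = c.
Proof.
rewrite rb_regular (divr_nat_mul2l c d T_gt0).
have inv_neq0 : (#|T| * d)%:R^-1 != 0 :> rat.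
  by rewrite invr_eq0 pnatr_eq0 -lt0n muln_gt0 T_gt0.
split => [/(mulIf inv_neq0)/eqP | all_c].
  by rewrite eqr_nat (eq_leqif sum_card_Tx_leqif) => /forallP all_c x; apply/eqP.
congr (_%:R / _); apply/eqP; rewrite (eq_leqif sum_card_Tx_leqif).
by apply/forallP => x; rewrite all_c.
Qed.

End RegularRobustness.

Section HammingGraph.

Variable n : nat.

Lemma hamming_sym (x y : vert n) : hamming x y = hamming y x.
Proof. by apply: eq_card => i; rewrite !inE eq_sym. Qed.

Lemma hadj_sym : symmetric (@hadj n).
Proof. by move=> x y; rewrite /hadj eq_sym hamming_sym. Qed.

Lemma hadj_irr : irreflexive (@hadj n).
Proof. by move=> x; rewrite /hadj eqxx. Qed.

(* The neighbour of x that agrees with x exactly at coordinate a, or nowhere when a = None. *)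
Definition flip_but (x : vert n) (a : option 'I_n) : vert n :=
  [ffun i => if Some i == a then x i else ~~ x i].

Lemma flip_but_inj x : injective (flip_but x).
Proof.
have flip_neq i : ~~ x i != x i by case: (x i).
move=> [a|] [b|] /ffunP eq_ab //; [move: (eq_ab a) | move: (eq_ab a) | move: (eq_ab b)];
  rewrite !ffunE /= ?eqxx //.
- by case: eqVneq => [-> // | _ /eqP]; rewrite eq_sym (negPf (flip_neq a)).
- by move/eqP; rewrite eq_sym (negPf (flip_neq a)).
- by move/eqP; rewrite (negPf (flip_neq b)).
Qed.

Lemma hamming_flip_but x a : n.-1 <= hamming x (flip_but x a).
Proof.
rewrite /hamming; case: a => [j|].
  rewrite -[n in n.-1]card_ord -(cardsC1 j); apply/subset_leq_card/subsetP => i.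
  by rewrite !inE ffunE /= -[_ == Some j]/(i == j) => /negPf->; case: (x i).
apply: leq_trans (leq_pred n) _; rewrite -[n in n <= _]card_ord.
by apply/subset_leq_card/subsetP => i _; rewrite inE ffunE /=; case: (x i).
Qed.

Lemma hadj_flip_but x a : 1 < n -> hadj x (flip_but x a).
Proof.
move=> n_gt1; rewrite /hadj hamming_flip_but andbT.
apply: contraTneq (hamming_flip_but x a) => <-.
have -> : hamming x x = 0 by apply: eq_card0 => i; rewrite !inE eqxx.
by rewrite -ltnNge; lia.
Qed.

Lemma hadj_flip_butP x y : hadj x y -> exists a, y = flip_but x a.
Proof.
case/andP=> _; rewrite /hamming => dist_xy.
set A := [set i | x i == y i].
have card_A : #|A| <= 1.
  suff : #|A| + #|[set i | x i != y i]| = n by lia.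
  by rewrite -[RHS]card_ord -(cardsC A); congr (_ + _); apply: eq_card => i; rewrite !inE.
have flip_eq a : {in ~: A, forall i, Some i != a} -> {in A, forall i, Some i == a} ->
    y = flip_but x a.
  move=> out_A in_A; apply/ffunP => i; rewrite ffunE.
  have [iA | iA] := boolP (i \in A).
    by rewrite in_A //; move: iA; rewrite inE => /eqP.
  by rewrite (negPf (out_A i _)) ?inE //; move: iA; rewrite inE; case: (x i); case: (y i).
have [A0 | [j jA]] := set_0Vmem A.
  by exists None; apply: flip_eq => // i; rewrite A0 inE.
exists (Some j); apply: flip_eq => i.
  by rewrite inE; apply: contraNneq => -[->].
move=> iA; apply/eqP; congr Some; apply/eqP; apply: contraTT card_A => neq_ij.
have sub_A : [set i; j] \subset A by rewrite subUset !sub1set iA jA.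
by rewrite -ltnNge (leq_trans _ (subset_leq_card sub_A)) // cards2 neq_ij.
Qed.

Lemma card_nbhd_hadj x : 1 < n -> #|nbhd (@hadj n) x| = n.+1.
Proof.
move=> n_gt1.
have -> : nbhd (@hadj n) x = flip_but x @: setT.
  apply/setP => y; rewrite inE; apply/idP/imsetP => [/hadj_flip_butP[a ->] | [a _ ->]].
    by exists a.
  exact: hadj_flip_but.
by rewrite card_imset ?cardsT ?card_option ?card_ord //; apply: flip_but_inj.
Qed.

Lemma card_vert_gt0 : 0 < #|vert n|.
Proof. by apply/card_gt0P; exists [ffun=> false]. Qed.

End HammingGraph.

Local Open Scope ring_scope.

Theorem proposition4p9 (n : nat) (hn : (3 <= n)%N) (K : vert n -> 'I_4) :
  proper_col (@hadj n) K ->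
  (forall x : vert n, (#|Tx (@hadj n) K x| <= 2)%N) /\
  rb (@hadj n) K <= 2%:R / (n.+1)%:R /\
  (rb (@hadj n) K = 2%:R / (n.+1)%:R <->
     (forall x : vert n, #|Tx (@hadj n) K x| = 2%N)).
Proof.
move=> K_proper.
have deg (x : vert n) : #|nbhd (@hadj n) x| = n.+1 by apply: card_nbhd_hadj; lia.
have Tx_le2 (x : vert n) : (#|Tx (@hadj n) K x| <= 2)%N.
  by apply: (card_Tx_le (@hadj_irr n) K_proper); rewrite deg.
have rb_le := rb_regular_le (@hadj_sym n) (@hadj_irr n) deg (ltn0Sn n) (card_vert_gt0 n) Tx_le2.
have rb_eq := rb_regular_eq (@hadj_sym n) (@hadj_irr n) deg (ltn0Sn n) (card_vert_gt0 n) Tx_le2.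
by split; last split.
Qed.
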